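(* Let $\pi:P\to M$ be a principal fibre bundle with group $G=P^{-1}P$, in the setting described in the context, and assume $G$ is commutative. Let $\nabla$ be a connection in $PP^{-1}$ with connection form $\omega$. Then the unique $G$-valued 2-form $\Omega$ on $M$ with $\pi^*\Omega=d\omega$ equals the curvature $R_\nabla$ (regarded as a $G$-valued 2-form via the identification of gauge-valued forms with $G$-valued forms described in the context): $R_\nabla=\Omega$.
   Context: Setting: $\Phi$ is a groupoid whose object set contains a set $M$ and an object $*\notin M$; $P$ is the set of arrows of $\Phi$ with domain $*$ and codomain in $M$; $\pi:P\to M$ the codomain map; $G=P^{-1}P:=\Phi( *,* )$ acts on $P$ from the right by precomposition, freely and transitively on fibres. $PP^{-1}$ is the full subgroupoid of $\Phi$ on $M$, acting on $P$ from the left by postcomposition; composition is right to left. $M$ and $P$ carry reflexive symmetric neighbour relations $\sim$; an infinitesimal $k$-simplex is a $(k+1)$-tuple of mutual neighbours; $\pi$ preserves $\sim$; every infinitesimal $k$-simplex in $M$ lifts to one in $P$ starting at any prescribed point over its first vertex; the right action of each $g\in G$ preserves $\sim$. A connection in $PP^{-1}$ assigns to each $a\sim b$ in $M$ an arrow $\nabla(a,b):b\to a$ of $PP^{-1}$, with $\nabla(a,a)=\mathrm{id}$, $\nabla(b,a)=\nabla(a,b)^{-1}$; its connection form is $\omega(u,v):=u^{-1}(\nabla(\pi u,\pi v)\cdot v)\in G$; its curvature is $R_\nabla(a_0,a_1,a_2)=\nabla(a_0,a_1)\nabla(a_1,a_2)\nabla(a_2,a_0)\in PP^{-1}(a_0,a_0)$.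 For a $G$-valued 1-form, $d\omega(x_0,x_1,x_2)=\omega(x_0,x_1)\omega(x_1,x_2)\omega(x_2,x_0)$. For a $G$-valued 2-form $\Omega$ on $M$, $(\pi^*\Omega)(u_0,u_1,u_2)=\Omega(\pi u_0,\pi u_1,\pi u_2)$. When $G$ is commutative, each endo-arrow $h\in PP^{-1}(a,a)$ written as $h=yx^{-1}$ with $x,y\in\pi^{-1}(a)$ is identified with $x^{-1}y\in G$ (independent of the choice of representation); this identifies the gauge group bundle with $M\times G$ and gauge-valued forms on $M$ with $G$-valued forms on $M$. *)

From Stdlib Require Import Arith.
Set Implicit Arguments.

Record groupoid := Groupoid {
  Obj : Type;
  Hom : Obj -> Obj -> Type;
  comp : forall x y z : Obj, Hom y z -> Hom x y -> Hom x z;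
  idg : forall x : Obj, Hom x x;
  invg : forall x y : Obj, Hom x y -> Hom y x;
  compA : forall (x y z w : Obj) (f : Hom z w) (g : Hom y z) (h : Hom x y),
      comp f (comp g h) = comp (comp f g) h;
  comp1g : forall (x y : Obj) (f : Hom x y), comp (idg y) f = f;
  compg1 : forall (x y : Obj) (f : Hom x y), comp f (idg x) = f;
  compVg : forall (x y : Obj) (f : Hom x y), comp (invg f) f = idg x;
  compgV : forall (x y : Obj) (f : Hom x y), comp f (invg f) = idg y
}.

Arguments comp {g0 x y z}.
Arguments idg {g0}.
Arguments invg {g0 x y}.

Definition inf_simplex (T : Type) (nb : T -> T -> Prop) (k : nat) (x : nat -> T) : Prop :=
  forall i j, i <= k -> j <= k -> nb (x i) (x j).

Section Bundle.
Variables (Phi : groupoid) (M : Type) (iM : M -> Obj Phi) (star : Obj Phi).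

(* P = arrows of Phi with domain * and codomain in M *)
Definition Parr : Type := { a : M & Hom Phi star (iM a) }.

Definition piP (u : Parr) : M := projT1 u.

(* right action of G = Phi(*,*) by precomposition *)
Definition ract (u : Parr) (g : Hom Phi star star) : Parr :=
  existT _ (projT1 u) (comp (projT2 u) g).

Definition conn_form (nabla : forall a b : M, Hom Phi (iM b) (iM a))
    (u v : Parr) : Hom Phi star star :=
  comp (invg (projT2 u)) (comp (nabla (projT1 u) (projT1 v)) (projT2 v)).

Definition dform (T : Type) (omega : T -> T -> Hom Phi star star) (x0 x1 x2 : T)
    : Hom Phi star star :=
  comp (omega x0 x1) (comp (omega x1 x2) (omega x2 x0)).

Definition curvature (nabla : forall a b : M, Hom Phi (iM b) (iM a)) (a0 a1 a2 : M)
    : Hom Phi (iM a0) (iM a0) :=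
  comp (nabla a0 a1) (comp (nabla a1 a2) (nabla a2 a0)).

End Bundle.

Arguments Parr {Phi M} iM star.
Arguments piP {Phi M iM star} u.
Arguments ract {Phi M iM star} u g.
Arguments conn_form {Phi M iM star} nabla u v.
Arguments dform {Phi star T} omega x0 x1 x2.
Arguments curvature {Phi M iM} nabla a0 a1 a2.

(* Transporting d omega along a point u over a0 gives
   d omega (u, u1, u2) = u^{-1} R(a0, a1, a2) u: every inner factor u_i u_i^{-1}
   cancels. Lifting the simplex (a0, a1, a2) starting at the given x, the relation
   pi^* Omega = d omega makes Omega(a0, a1, a2) the conjugate of R = y x^{-1} by x,
   which is x^{-1} y. *)
From Stdlib Require Import Arith Lia.
Set Implicit Arguments.

Arguments compA {g0 x y z w}.
Arguments compgV {g0 x y}.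
Arguments compVg {g0 x y}.
Arguments comp1g {g0 x y}.
Arguments compg1 {g0 x y}.

Definition triple (T : Type) (t0 t1 t2 : T) (i : nat) : T :=
  match i with 0 => t0 | 1 => t1 | _ => t2 end.

Lemma inf_simplex_ext (T : Type) (nb : T -> T -> Prop) (k : nat) (x y : nat -> T) :
  (forall i, i <= k -> x i = y i) -> inf_simplex nb k x -> inf_simplex nb k y.
Proof.
  intros Exy Hx i j Hi Hj.
  rewrite <- (Exy i Hi), <- (Exy j Hj).
  apply Hx; assumption.
Qed.

Lemma inf_simplex2_triple (T : Type) (nb : T -> T -> Prop) (y : nat -> T) :
  inf_simplex nb 2 y -> inf_simplex nb 2 (triple (y 0) (y 1) (y 2)).
Proof.
  apply inf_simplex_ext.
  intros [|[|[|i]]] Hi; try reflexivity.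
  exfalso; lia.
Qed.

Section GroupoidCancel.
Variable G : groupoid.

Lemma comp_cancel_invg (s b c d : Obj G) (p : Hom G s b) (h : Hom G b c) (k : Hom G d b) :
  comp (comp h p) (comp (invg p) k) = comp h k.
Proof. rewrite <- compA, (compA p), compgV, comp1g. reflexivity. Qed.

Lemma conj_comp_invg (s a : Obj G) (x y : Hom G s a) :
  comp (invg x) (comp (comp y (invg x)) x) = comp (invg x) y.
Proof. rewrite <- compA, compVg, compg1. reflexivity. Qed.

End GroupoidCancel.

Lemma dform_conn_form (Phi : groupoid) (M : Type) (iM : M -> Obj Phi) (star : Obj Phi)
  (nabla : forall a b : M, Hom Phi (iM b) (iM a)) (u0 u1 u2 : Parr iM star) :
  dform (conn_form nabla) u0 u1 u2 =
  comp (invg (projT2 u0)) (comp (curvature nabla (piP u0) (piP u1) (piP u2)) (projT2 u0)).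
Proof.
  destruct u0 as [a0 p0], u1 as [a1 p1], u2 as [a2 p2].
  unfold dform, conn_form, curvature, piP; simpl.
  rewrite (compA (invg p1)), comp_cancel_invg.
  rewrite (compA (invg p0)), <- (compA (invg p1)), comp_cancel_invg.
  rewrite <- !compA. reflexivity.
Qed.

Section Pullback.
Variables (Phi : groupoid) (M : Type) (iM : M -> Obj Phi) (star : Obj Phi).
Variables (nbM : M -> M -> Prop) (nbP : Parr iM star -> Parr iM star -> Prop).
Hypothesis lift : forall (k : nat) (x : nat -> M), inf_simplex nbM k x ->
  forall u0 : Parr iM star, piP u0 = x 0 ->
  exists y : nat -> Parr iM star,
    y 0 = u0 /\ (forall i, i <= k -> piP (y i) = x i) /\ inf_simplex nbP k y.
Variable nabla : forall a b : M, Hom Phi (iM b) (iM a).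
Variable Omega : M -> M -> M -> Hom Phi star star.
Hypothesis hOmega : forall u0 u1 u2 : Parr iM star,
  inf_simplex nbP 2 (triple u0 u1 u2) ->
  Omega (piP u0) (piP u1) (piP u2) = dform (conn_form nabla) u0 u1 u2.

Lemma Omega_conj_curvature (a0 a1 a2 : M) (p : Hom Phi star (iM a0)) :
  inf_simplex nbM 2 (triple a0 a1 a2) ->
  Omega a0 a1 a2 = comp (invg p) (comp (curvature nabla a0 a1 a2) p).
Proof.
  intros Ha.
  destruct (lift Ha (existT _ a0 p) eq_refl) as [u [Hu0 [Hpi Hu]]].
  assert (E1 : piP (u 1) = a1) by (apply (Hpi 1); lia).
  assert (E2 : piP (u 2) = a2) by (apply (Hpi 2); lia).
  pose proof (hOmega (inf_simplex2_triple Hu)) as H.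
  rewrite dform_conn_form, Hu0, E1, E2 in H.
  exact H.
Qed.

End Pullback.

Theorem corollary1
  (Phi : groupoid) (M : Type) (iM : M -> Obj Phi) (star : Obj Phi)
  (* the object set of Phi contains M and an object * not in M *)
  (iM_inj : forall a b : M, iM a = iM b -> a = b)
  (star_notin : forall a : M, iM a <> star)
  (* neighbour relations *)
  (nbM : M -> M -> Prop) (nbP : Parr iM star -> Parr iM star -> Prop)
  (nbM_refl : forall a, nbM a a) (nbM_sym : forall a b, nbM a b -> nbM b a)
  (nbP_refl : forall u, nbP u u) (nbP_sym : forall u v, nbP u v -> nbP v u)
  (pi_nb : forall u v, nbP u v -> nbM (piP u) (piP v))
  (lift : forall (k : nat) (x : nat -> M), inf_simplex nbM k x ->
      forall u0 : Parr iM star, piP u0 = x 0 ->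
      exists y : nat -> Parr iM star,
        y 0 = u0 /\ (forall i, i <= k -> piP (y i) = x i) /\ inf_simplex nbP k y)
  (ract_nb : forall (g : Hom Phi star star) u v, nbP u v -> nbP (ract u g) (ract v g))
  (* G is commutative *)
  (G_comm : forall g h : Hom Phi star star, comp g h = comp h g)
  (* a connection in P P^{-1} *)
  (nabla : forall a b : M, Hom Phi (iM b) (iM a))
  (nabla_refl : forall a, nabla a a = idg (iM a))
  (nabla_sym : forall a b, nbM a b -> nabla b a = invg (nabla a b))
  (* a G-valued 2-form Omega on M with pi^* Omega = d omega *)
  (Omega : M -> M -> M -> Hom Phi star star)
  (hOmega : forall u0 u1 u2 : Parr iM star,
      inf_simplex nbP 2 (fun i => match i with 0 => u0 | 1 => u1 | _ => u2 end) ->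
      Omega (piP u0) (piP u1) (piP u2) = dform (conn_form nabla) u0 u1 u2) :
  (* R_nabla = Omega, with R(a0,a1,a2) = y x^{-1} identified with x^{-1} y *)
  forall a0 a1 a2 : M,
    inf_simplex nbM 2 (fun i => match i with 0 => a0 | 1 => a1 | _ => a2 end) ->
    forall x y : Hom Phi star (iM a0),
      curvature nabla a0 a1 a2 = comp y (invg x) ->
      Omega a0 a1 a2 = comp (invg x) y.
Proof.
  intros a0 a1 a2 Ha x y HR.
  rewrite (Omega_conj_curvature lift _ _ hOmega x Ha), HR.
  apply conj_comp_invg.
Qed.
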